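(* If $M$ is an irreducible finite-dimensional graded ${}^\theta\mathbf R_m$-module, then for every sequence $\mathbf i$ one has ${\rm gdim}(1_{\mathbf i}M)\in v\,\mathbb Z[v^2,v^{-2}]\cup\mathbb Z[v^2,v^{-2}]$.
   Context: Let $\mathbf k$ be an algebraically closed field of characteristic $0$. Fix $p,q\in\mathbf k^\times$ with $p\ne\pm1$, and $I\subset\mathbf k^\times$ with $1,-1\notin I$, stable under $z\mapsto p^{\pm2}z$ and $z\mapsto z^{-1}$. Let $h_{i,j}=1$ if $i=p^2j$ and $0$ otherwise, $i\cdot j=-h_{i,j}-h_{j,i}$ ($i\ne j$), $i\cdot i=2$, $\theta(i)=i^{-1}$, $\lambda_i=1$ if $i\in\{q,-q\}$ and $0$ otherwise, $Q_{i,j}(u,v)=(-1)^{h_{i,j}}(u-v)^{-i\cdot j}$ ($i\ne j$), $Q_{i,i}=0$. For $\nu\in\mathbb NI$ with $\nu_{\theta(i)}=\nu_i$, $\sum\nu_i=2m$, ${}^\theta I^\nu$ is the set of $\mathbf i=(i_{1-m},\dots,i_m)\in I^{2m}$ with $i_{1-l}=\theta(i_l)$ and $\#\{l:i_l=i\}=\nu_i$. $W_m=\mathfrak S_m\ltimes(\mathbb Z/2)^m$ acts on $\{1-m,\dots,m\}$ by permutations commuting with $l\mapsto1-l$ ($\varepsilon_l$ exchanges $l,1-l$; $s_k$ the transposition of $k,k+1$) and on sequences by $(w\mathbf i)_l=i_{w^{-1}(l)}$. The graded algebra ${}^\theta\mathbf R_{\lambda,\nu}$ ($m\ge1$) is generated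 by $1_{\mathbf i}$, $\varkappa_l$ ($1\le l\le m$), $\sigma_k$ ($1\le k\le m-1$), $\pi_1$, with $1=\sum1_{\mathbf i}$, $\varkappa_{1-l}:=-\varkappa_l$, and relations: $1_{\mathbf i}1_{\mathbf i'}=\delta_{\mathbf i,\mathbf i'}1_{\mathbf i}$, $\sigma_k1_{\mathbf i}=1_{s_k\mathbf i}\sigma_k$, $\varkappa_l1_{\mathbf i}=1_{\mathbf i}\varkappa_l$, $\pi_11_{\mathbf i}=1_{\varepsilon_1\mathbf i}\pi_1$; $\varkappa$'s commute, $\pi_1\varkappa_l=\varkappa_{\varepsilon_1(l)}\pi_1$; $\sigma_k^21_{\mathbf i}=Q_{i_k,i_{k+1}}(\varkappa_{k+1},\varkappa_k)1_{\mathbf i}$, $\pi_1^21_{\mathbf i}=\varkappa_0^{\lambda_{i_0}}\varkappa_1^{\lambda_{i_1}}1_{\mathbf i}$; $\sigma_k\sigma_{k'}=\sigma_{k'}\sigma_k$ ($|k-k'|\ne1$), $\pi_1\sigma_k=\sigma_k\pi_1$ ($k\ne1$); $(\sigma_1\pi_1)^21_{\mathbf i}=(\pi_1\sigma_1)^21_{\mathbf i}+\delta_{i_0,i_2}(-1)^{\lambda_{i_2}}\frac{\varkappa_0^{\lambda_{i_1}+\lambda_{i_2}}-\varkappa_2^{\lambda_{i_1}+\lambda_{i_2}}}{\varkappa_0-\varkappa_2}\sigma_11_{\mathbf i}$; $(\sigma_{k+1}\sigma_k\sigma_{k+1}-\sigma_k\sigma_{k+1}\sigma_k)1_{\mathbf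 i}=\delta_{i_k,i_{k+2}}\frac{Q_{i_k,i_{k+1}}(\varkappa_{k+1},\varkappa_k)-Q_{i_k,i_{k+1}}(\varkappa_{k+1},\varkappa_{k+2})}{\varkappa_k-\varkappa_{k+2}}1_{\mathbf i}$; $(\sigma_k\varkappa_l-\varkappa_{s_k(l)}\sigma_k)1_{\mathbf i}$ is $-1_{\mathbf i}$ if $l=k$, $i_k=i_{k+1}$, is $1_{\mathbf i}$ if $l=k+1$, $i_k=i_{k+1}$, and $0$ otherwise. Grading: $\deg1_{\mathbf i}=0$, $\deg\varkappa_l=2$, $\deg(\pi_11_{\mathbf i})=\lambda_{i_0}+\lambda_{i_1}$, $\deg(\sigma_k1_{\mathbf i})=-i_k\cdot i_{k+1}$. ${}^\theta\mathbf R_m=\bigoplus_{\nu:\sum\nu_i=2m}{}^\theta\mathbf R_{\lambda,\nu}$, ${}^\theta\mathbf R_0=\mathbf k$. For a graded vector space $N$, ${\rm gdim}\,N=\sum_dv^d\dim N_d$. *)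

From HB Require Import structures.
From mathcomp Require Import all_boot all_order all_algebra.
Set Implicit Arguments. Unset Strict Implicit. Unset Printing Implicit Defensive.
Import Order.TTheory GRing.Theory Num.Theory.
Local Open Scope ring_scope.

(* Finite-dimensional graded modules over the algebra  theta R_m, encoded    *)
(* concretely:                                                *)
(*  - M = k^n (column vectors) with a homogeneous basis e_0..e_{n-1}, the    *)
(*    basis vector e_a having degree  deg a : int;                           *)
(*  - every generator acts by an n x n matrix (column convention, so the     *)
(*    product  x y  of the algebra acts by  X *m Y);                         *)
(*  - a theta-sequence i = (i_{1-m},...,i_m) with i_{1-l} = i_l^{-1} is      *)
(*    encoded by its right half  s = [:: i_1; ...; i_m] : seq k;            *)
(*  - E s  = action of 1_i,  X l = action of kappa_l (1 <= l <= m),          *)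
(*    S k  = action of sigma_k (1 <= k <= m-1),  P = action of pi_1.         *)

Section ThetaR.
Variable K : fieldType.
Variables (p q : K) (I : pred K) (m n : nat) (deg : 'I_n -> int).

Definition valid_seq (s : seq K) : bool := (size s == m) && all I s.

(* i_l for l in {1-m, ..., m} *)
Definition ival (s : seq K) (l : int) : K :=
  if (0 < l) then nth 0 s `|l - 1|%N else (nth 0 s `|l|%N)^-1.

(* s_k acting on sequences: exchange i_k and i_{k+1} (1 <= k <= m-1) *)
Definition swap_seq (s : seq K) (k : nat) : seq K :=
  mkseq (fun j => if j == k.-1 then nth 0 s k
                  else if j == k then nth 0 s k.-1 else nth 0 s j) (size s).

(* epsilon_1 acting on sequences: exchange i_0 and i_1 *)
Definition eps1_seq (s : seq K) : seq K :=
  mkseq (fun j => if j == 0%N then (nth 0 s 0)^-1 else nth 0 s j) (size s).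

Definition hh (a b : K) : nat := (a == p ^+ 2 * b).
Definition lam (a : K) : nat := (a == q) || (a == - q).
Definition mdot (a b : K) : int :=
  if a == b then (-2)%R else (hh a b + hh b a)%:Z.

(* (A^N - B^N)/(A - B) = sum_{t<N} A^t B^(N-1-t), for commuting A, B *)
Definition dd (N : nat) (A B : 'M[K]_n) : 'M[K]_n :=
  \sum_(t < N) A ^+ t *m B ^+ (N.-1 - t).

Definition Qm (a b : K) (U V : 'M[K]_n) : 'M[K]_n :=
  if a == b then 0 else (-1) ^+ hh a b *: (U - V) ^+ (hh a b + hh b a).

(* (Q_{a,b}(U,V) - Q_{a,b}(U,W)) / (V - W), for commuting U, V, W *)
Definition DQm (a b : K) (U V W : 'M[K]_n) : 'M[K]_n :=
  if a == b then 0
  else - ((-1) ^+ hh a b *: dd (hh a b + hh b a) (U - V) (U - W)).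

Definition homog (A : 'M[K]_n) (d : int) : Prop :=
  forall a b : 'I_n, A a b != 0 -> deg a = deg b + d.

Variables (E : seq K -> 'M[K]_n) (X S : nat -> 'M[K]_n) (P : 'M[K]_n).

(* kappa_l for all l in {1-m,...,m}, with kappa_{1-l} = - kappa_l *)
Definition kap (l : int) : 'M[K]_n :=
  if (0 < l) then X `|l| else - X `|1 - l|.

Definition eps1_int (l : int) : int :=
  if l == 1 then 0 else if l == 0 then 1 else l.

Definition sk_nat (k l : nat) : nat :=
  if l == k then k.+1 else if l == k.+1 then k else l.

Definition is_thetaR_gmod : Prop :=
  (forall i i', valid_seq i -> valid_seq i' ->
     E i *m E i' = if i == i' then E i else 0)
  (* 1 = sum 1_i  (finitely many 1_i act nontrivially on M) *)
  /\ (exists Sq : seq (seq K), all valid_seq Sq /\ uniq Sq /\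
        \sum_(i <- Sq) E i = 1%:M /\
        (forall i, valid_seq i -> i \notin Sq -> E i = 0))
  /\ (forall i k, valid_seq i -> (1 <= k < m)%N ->
        S k *m E i = E (swap_seq i k) *m S k)
  /\ (forall i l, valid_seq i -> (1 <= l <= m)%N -> X l *m E i = E i *m X l)
  /\ (forall i, valid_seq i -> (1 <= m)%N -> P *m E i = E (eps1_seq i) *m P)
  /\ (forall l l', (1 <= l <= m)%N -> (1 <= l' <= m)%N ->
        X l *m X l' = X l' *m X l)
  /\ (forall l : nat, (1 <= m)%N -> (1 <= l <= m)%N ->
        P *m kap l = kap (eps1_int l) *m P)
  /\ (forall i k, valid_seq i -> (1 <= k < m)%N ->
        S k ^+ 2 *m E i =
        Qm (ival i k) (ival i k.+1) (kap k.+1) (kap k) *m E i)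
  /\ (forall i, valid_seq i -> (1 <= m)%N ->
        P ^+ 2 *m E i =
        kap 0 ^+ lam (ival i 0) *m kap 1 ^+ lam (ival i 1) *m E i)
  /\ (forall k k', (1 <= k < m)%N -> (1 <= k' < m)%N ->
        k' != k.+1 -> k != k'.+1 -> S k *m S k' = S k' *m S k)
  /\ (forall k, (2 <= k < m)%N -> P *m S k = S k *m P)
  /\ (forall i, valid_seq i -> (2 <= m)%N ->
        (S 1 *m P) ^+ 2 *m E i =
        (P *m S 1) ^+ 2 *m E i +
        (if ival i 0 == ival i 2 then
           (-1) ^+ lam (ival i 2) *:
             (dd (lam (ival i 1) + lam (ival i 2)) (kap 0) (kap 2)
                *m S 1 *m E i)
         else 0))
  /\ (forall i k, valid_seq i -> (1 <= k)%N -> (k.+2 <= m)%N ->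
        (S k.+1 *m S k *m S k.+1 - S k *m S k.+1 *m S k) *m E i =
        (if ival i k == ival i k.+2 then
           DQm (ival i k) (ival i k.+1) (kap k.+1) (kap k) (kap k.+2) *m E i
         else 0))
  /\ (forall i k l, valid_seq i -> (1 <= k < m)%N -> (1 <= l <= m)%N ->
        (S k *m X l - X (sk_nat k l) *m S k) *m E i =
        (if ival i k == ival i k.+1 then
           (if l == k then - E i else if l == k.+1 then E i else 0)
         else 0))
  /\ (forall i, valid_seq i -> homog (E i) 0)
  /\ (forall l, (1 <= l <= m)%N -> homog (X l) 2)
  /\ (forall i k, valid_seq i -> (1 <= k < m)%N ->
        homog (S k *m E i) (mdot (ival i k) (ival i k.+1)))
  /\ (forall i, valid_seq i -> (1 <= m)%N ->
        homog (P *m E i) (lam (ival i 0) + lam (ival i 1))%:Z).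

(* Subspaces of M = k^n are given as row spaces of W^T-style matrices:      *)
(* the row space of W : 'M_n is the subspace {w^T}.  The column vector v    *)
(* lies in it iff v^T is in the row space of W.                             *)

(* degree-d component M_d, as a row space *)
Definition Dmx (d : int) : 'M[K]_n := diag_mx (\row_a ((deg a == d)%:R)).

Definition graded_subspace (W : 'M[K]_n) : bool :=
  (W <= \sum_(a < n) (W :&: Dmx (deg a)))%MS.

Definition stab (W A : 'M[K]_n) : bool := (W *m A^T <= W)%MS.

Definition irreducible_gmod : Prop :=
  (0 < n)%N /\
  forall W : 'M[K]_n, graded_subspace W ->
    (forall i, valid_seq i -> stab W (E i)) ->
    (forall l, (1 <= l <= m)%N -> stab W (X l)) ->
    (forall k, (1 <= k < m)%N -> stab W (S k)) ->
    ((1 <= m)%N -> stab W P) ->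
    (W == (0 : 'M[K]_n))%MS || row_full W.

End ThetaR.

(* graded dimension of the image of a degree-0 idempotent-like operator A:  *)
(* coefficient of v^d in gdim(A M) = dim (A M)_d                             *)
Definition gdim_coef (K : fieldType) (n : nat) (deg : 'I_n -> int)
  (A : 'M[K]_n) (d : int) : nat :=
  \rank (A^T :&: @Dmx K n deg d)%MS.

(* f (as coefficients of a Laurent polynomial in v) lies in Z[v^2,v^-2] *)
Definition in_Zv2 (f : int -> nat) : Prop :=
  forall d : int, ~~ (2 %| d)%Z -> f d = 0%N.
(* f lies in v Z[v^2,v^-2] *)
Definition in_vZv2 (f : int -> nat) : Prop :=
  forall d : int, (2 %| d)%Z -> f d = 0%N.

Definition theta_params (K : closedFieldType) (p q : K) (I : pred K) : Prop :=
  [pchar K] =i pred0 /\ p != 0 /\ q != 0 /\ p != 1 /\ p != -1 /\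
  (forall z, I z -> z != 0) /\ ~~ I 1 /\ ~~ I (-1) /\
  (forall z, I z -> I (p ^+ 2 * z) /\ I (p ^- 2 * z) /\ I z^-1).

From HB Require Import structures.
From mathcomp Require Import all_boot all_order all_algebra zify ring.
Set Implicit Arguments. Unset Strict Implicit. Unset Printing Implicit Defensive.
Import Order.TTheory GRing.Theory Num.Theory.
Local Open Scope ring_scope.

(* Attach to a theta-sequence i the parity [seq_parity i] of an explicit
   weight.  Each generator maps 1_i M into some 1_j M by a homogeneous map
   whose degree has parity [seq_parity j - seq_parity i].  Hence the operator
   projecting every 1_j M onto its degrees of parity [seq_parity j] commutes
   with the whole algebra and with the grading, so its image is a graded
   submodule.  By irreducibility that image is 0 or M; in both cases each
   1_i M lives in degrees of a single parity. *)

Definition oddz (z : int) : bool := ~~ (2 %| z)%Z.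

Lemma oddzD (x y : int) : oddz (x + y) = oddz x (+) oddz y.
Proof.
rewrite /oddz; have -> : (2 %| x + y)%Z = ((2 %| x)%Z == (2 %| y)%Z).
  by apply/idP/eqP; lia.
by case: (2 %| x)%Z; case: (2 %| y)%Z.
Qed.

Lemma oddz_nat (k : nat) : oddz k%:Z = odd k.
Proof. by rewrite /oddz dvdzE /= dvdn2 negbK. Qed.

Section ThetaSequences.
Variable K : fieldType.

Lemma swap_seq_cat (u w : seq K) (x y : K) :
  swap_seq (u ++ x :: y :: w) (size u).+1 = u ++ y :: x :: w.
Proof.
apply: (@eq_from_nth _ 0); first by rewrite /swap_seq size_mkseq !size_cat.
rewrite /swap_seq size_mkseq => j lt_j; rewrite nth_mkseq //= !nth_cat.
case: (ltngtP j (size u)) => [lt_ju|gt_ju|->]; last by rewrite ltnNge leqnSn subSnn subnn.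
- by rewrite (ltn_eqF (leqW lt_ju)).
- case: (ltngtP j (size u).+1) => [|lt_uj|->]; first by rewrite ltnS leqNgt gt_ju.
  + by have -> : (j - size u = (j - (size u).+2).+2)%N by lia.
  + by rewrite ltnn subnn subSnn.
Qed.

Lemma seq_split2 (s : seq K) k : (1 <= k < size s)%N ->
  exists u x y w, s = u ++ x :: y :: w /\ k = (size u).+1.
Proof.
case/andP => k_gt0 lt_ks; have lt_k1s : (k.-1 < size s)%N by lia.
exists (take k.-1 s), (nth 0 s k.-1), (nth 0 s k), (drop k.+1 s); split.
  by rewrite -{1}(cat_take_drop k.-1 s) (drop_nth 0 lt_k1s) prednK // (drop_nth 0 lt_ks).
by rewrite size_takel ?prednK // ltnW.
Qed.

Lemma eps1_seq_cons (x : K) (w : seq K) : eps1_seq (x :: w) = x^-1 :: w.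
Proof.
apply: (@eq_from_nth _ 0); first by rewrite /eps1_seq size_mkseq.
by rewrite /eps1_seq size_mkseq => -[|j] lt_j; rewrite nth_mkseq.
Qed.

Lemma ivalS (s : seq K) k : ival s k.+1 = nth 0 s k.
Proof. by rewrite /ival ltz_nat /= subn1. Qed.

Lemma ival0 (s : seq K) : ival s 0 = (nth 0 s 0)^-1.
Proof. by []. Qed.

Variables (I : pred K) (m : nat).

Lemma valid_swap_seq s k : valid_seq I m s -> (1 <= k < m)%N ->
  valid_seq I m (swap_seq s k).
Proof.
case/andP=> /eqP size_s Is; rewrite /valid_seq {1}/swap_seq size_mkseq size_s eqxx.
rewrite -size_s; case/seq_split2 => u [x [y [w [Es ->]]]]; move: Is.
by rewrite Es swap_seq_cat !all_cat /= => /andP[-> /and3P[-> -> ->]].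
Qed.

Lemma valid_eps1_seq s : (forall z, I z -> I z^-1) ->
  valid_seq I m s -> (1 <= m)%N -> valid_seq I m (eps1_seq s).
Proof.
move=> I_inv /andP[/eqP <-]; case: s => [|x w] //= /andP[Ix Iw] _.
by rewrite eps1_seq_cons /valid_seq /= eqxx I_inv.
Qed.

End ThetaSequences.

Section ParityInvariant.
Variables (K : fieldType) (p q : K).

Definition cross_weight (x y : K) : nat := (hh p x y + hh p x^-1 y)%N.

Fixpoint seq_weight (s : seq K) : nat :=
  if s is x :: s' then (lam q x + \sum_(y <- s') cross_weight x y + seq_weight s')%N
  else 0%N.

Definition seq_parity (s : seq K) : bool := odd (seq_weight s).

Lemma hh_inv (x y : K) : x != 0 -> y != 0 -> hh p x^-1 y = hh p y^-1 x.
Proof.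
move=> x0 y0; rewrite /hh; congr nat_of_bool.
suff inv_swap a b : a != 0 -> b != 0 -> a^-1 = p ^+ 2 * b -> b^-1 = p ^+ 2 * a.
  by apply/eqP/eqP; apply: inv_swap.
move=> a_neq0 b_neq0 ab; have -> : p ^+ 2 * a = p ^+ 2 * b * a / b by field.
by rewrite -ab mulVf // mul1r.
Qed.

Lemma seq_weight_swap (u w : seq K) (x y : K) :
  (seq_weight (u ++ y :: x :: w) + cross_weight x y =
   seq_weight (u ++ x :: y :: w) + cross_weight y x)%N.
Proof.
elim: u => [|z u IHu] /=; first by rewrite !big_cons; lia.
by rewrite !big_cat !big_cons /=; lia.
Qed.

Lemma seq_parity_swap (s : seq K) k : all (fun z => z != 0) s ->
  (1 <= k < size s)%N ->
  seq_parity (swap_seq s k) = seq_parity s (+) oddz (mdot p (ival s k) (ival s k.+1)).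
Proof.
move=> s_neq0; case/seq_split2 => u [x [y [w [Es ->]]]]; subst s.
rewrite swap_seq_cat !ivalS nth_cat ltnn subnn nth_cat ltnNge leqnSn /= subSnn /=.
move: s_neq0; rewrite all_cat /= => /and4P[_ x_neq0 y_neq0 _].
rewrite /mdot; case: eqP => [<-|_]; first by rewrite addbF.
have := congr1 odd (seq_weight_swap u w x y).
rewrite /cross_weight (hh_inv x_neq0 y_neq0) /seq_parity oddz_nat !oddD.
by move: (odd _) (odd _) (odd _) (odd _) (odd _) => [] [] [] [] [].
Qed.

Lemma seq_parity_eps1 (s : seq K) : (0 < size s)%N ->
  seq_parity (eps1_seq s) =
  seq_parity s (+) oddz (lam q (ival s 0) + lam q (ival s 1))%:Z.
Proof.
case: s => [//|x w] _; rewrite eps1_seq_cons ival0 (ivalS _ 0) /seq_parity /=.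
have -> : \sum_(y <- w) cross_weight x^-1 y = \sum_(y <- w) cross_weight x y.
  by apply: eq_bigr => y _; rewrite /cross_weight invrK addnC.
rewrite oddz_nat !oddD.
by move: (odd _) (odd _) (odd _) (odd _) => [] [] [] [].
Qed.

End ParityInvariant.

Section DegreeDiagonals.
Variables (K : fieldType) (n : nat) (deg : 'I_n -> int).

Definition deg_diag (g : int -> K) : 'M[K]_n := diag_mx (\row_a g (deg a)).

Definition parity_mx (e : bool) : 'M[K]_n := deg_diag (fun z => (oddz z == e)%:R).

Lemma homog_deg_diag g : homog deg (deg_diag g) 0.
Proof.
move=> a b; rewrite !mxE; case: (eqVneq a b) => [->|_]; first by rewrite addr0.
by rewrite mulr0n eqxx.
Qed.

Lemma homogM (A B : 'M[K]_n) d1 d2 : homog deg A d1 -> homog deg B d2 ->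
  homog deg (A *m B) (d1 + d2).
Proof.
move=> homA homB a b; rewrite mxE => AB_ab_neq0.
have [c /andP[A_ac B_cb]] : exists c, (A a c != 0) && (B c b != 0).
  apply/existsP; apply: contraNT AB_ab_neq0; rewrite negb_exists => /forallP AB0.
  apply/eqP/big1 => c _; have := AB0 c; rewrite negb_and !negbK.
  by case/orP=> /eqP ->; rewrite ?mul0r ?mulr0.
by rewrite (homA _ _ A_ac) (homB _ _ B_cb) -addrA (addrC d2).
Qed.

Lemma homog_mul_deg_diag (A : 'M[K]_n) d g : homog deg A d ->
  A *m deg_diag (fun z => g (z + d)) = deg_diag g *m A.
Proof.
move=> homA; apply/matrixP => a b; rewrite mul_mx_diag mul_diag_mx !mxE.
have [->|A_ab_neq0] := eqVneq (A a b) 0; first by rewrite mulr0 mul0r.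
by rewrite (homA _ _ A_ab_neq0) mulrC.
Qed.

Lemma homog0_deg_diagC (A : 'M[K]_n) g : homog deg A 0 ->
  A *m deg_diag g = deg_diag g *m A.
Proof.
move=> homA; rewrite -(homog_mul_deg_diag g homA); congr (_ *m _).
by apply/matrixP => a b; rewrite !mxE addr0.
Qed.

Lemma homog_parity_mxC (A : 'M[K]_n) d e : homog deg A d ->
  A *m parity_mx e = parity_mx (e (+) oddz d) *m A.
Proof.
move=> homA; rewrite -(homog_mul_deg_diag _ homA); congr (_ *m _).
apply/matrixP => a b; rewrite !mxE oddzD.
by case: (oddz (deg a)); case: e; case: (oddz d).
Qed.

Lemma parity_mx_orth e : parity_mx (~~ e) *m parity_mx e = 0.
Proof.
apply/matrixP => a b; rewrite mulmx_diag !mxE.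
by case: (oddz (deg a)); case: e; rewrite ?mulr0 ?mul0r ?mul0rn.
Qed.

Lemma graded_subspace_of_stab (W : 'M[K]_n) :
  (forall d, stab W (Dmx K deg d)) -> graded_subspace deg W.
Proof.
move=> W_stab; set degs := undup [seq deg a | a <- enum 'I_n].
have sum_Dmx : \sum_(d <- degs) Dmx K deg d = 1%:M.
  apply/matrixP => a b; rewrite summxE !mxE.
  have [<-|ab] := eqVneq a b; last first.
    by rewrite big1 // => d _; rewrite !mxE (negPf ab) mulr0n.
  rewrite (bigD1_seq (deg a)) ?undup_uniq //=; last first.
    by rewrite mem_undup; apply/mapP; exists a; rewrite ?mem_enum.
  rewrite !mxE !eqxx big1 ?addr0 // => d /negPf da.
  by rewrite !mxE eqxx eq_sym da.
rewrite /graded_subspace -[W in (W <= _)%MS]mulmx1 -sum_Dmx mulmx_sumr big_seq.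
apply/summx_sub => d; rewrite mem_undup => /mapP[a _ ->].
apply: (sumsmx_sup a) => //; rewrite sub_capmx submxMl andbT.
by have := W_stab (deg a); rewrite /stab tr_diag_mx.
Qed.

Lemma gdim_coef_eq0 (A : 'M[K]_n) e d :
  parity_mx e *m A = 0 -> oddz d = e -> gdim_coef deg A d = 0%N.
Proof.
move=> eA0 de; apply/eqP; rewrite mxrank_eq0 -submx0.
have Dmx_parity : Dmx K deg d *m parity_mx e = Dmx K deg d.
  rewrite mulmx_diag; congr diag_mx; apply/rowP => a; rewrite !mxE.
  by case: eqP => [->|]; rewrite ?de ?eqxx ?mulr1 ?mul0r.
have [D defC] := submxP (capmxSr A^T (Dmx K deg d)).
have C_parity : (A^T :&: Dmx K deg d)%MS *m parity_mx e = (A^T :&: Dmx K deg d)%MS.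
  by rewrite defC -mulmxA Dmx_parity.
rewrite -C_parity; apply: (submx_trans (submxMr _ (capmxSl A^T (Dmx K deg d)))).
by rewrite -[parity_mx e]tr_diag_mx -trmx_mul eA0 trmx0.
Qed.

End DegreeDiagonals.

Arguments deg_diag {K n}.
Arguments parity_mx {K n}.

Section ParityProjection.
Variables (K : fieldType) (p q : K) (I : pred K) (m n : nat) (deg : 'I_n -> int).
Variables (E : seq K -> 'M[K]_n) (X S : nat -> 'M[K]_n) (P : 'M[K]_n).
Variable Sq : seq (seq K).

Hypothesis I_neq0 : forall z, I z -> z != 0.
Hypothesis I_inv : forall z, I z -> I z^-1.
Hypothesis E_mul : forall i i', valid_seq I m i -> valid_seq I m i' ->
  E i *m E i' = if i == i' then E i else 0.
Hypothesis Sq_valid : all (valid_seq I m) Sq.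
Hypothesis Sq_uniq : uniq Sq.
Hypothesis E_sum : \sum_(i <- Sq) E i = 1%:M.
Hypothesis E_notin_Sq : forall i, valid_seq I m i -> i \notin Sq -> E i = 0.
Hypothesis S_E : forall i k, valid_seq I m i -> (1 <= k < m)%N ->
  S k *m E i = E (swap_seq i k) *m S k.
Hypothesis X_E : forall i l, valid_seq I m i -> (1 <= l <= m)%N ->
  X l *m E i = E i *m X l.
Hypothesis P_E : forall i, valid_seq I m i -> (1 <= m)%N ->
  P *m E i = E (eps1_seq i) *m P.
Hypothesis E_homog : forall i, valid_seq I m i -> homog deg (E i) 0.
Hypothesis X_homog : forall l, (1 <= l <= m)%N -> homog deg (X l) 2.
Hypothesis SE_homog : forall i k, valid_seq I m i -> (1 <= k < m)%N ->
  homog deg (S k *m E i) (mdot p (ival i k) (ival i k.+1)).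
Hypothesis PE_homog : forall i, valid_seq I m i -> (1 <= m)%N ->
  homog deg (P *m E i) (lam q (ival i 0) + lam q (ival i 1))%:Z.

Local Notation parity := (seq_parity p q).

Let valid_of_Sq i : i \in Sq -> valid_seq I m i := allP Sq_valid i.

Definition parity_proj : 'M[K]_n := \sum_(j <- Sq) E j *m parity_mx deg (parity j).

Lemma parity_projE j : valid_seq I m j ->
  parity_proj *m E j = parity_mx deg (parity j) *m E j.
Proof.
move=> vj; have [jSq|/E_notin_Sq-> //] := boolP (j \in Sq); last by rewrite !mulmx0.
have E_parityC j' e : valid_seq I m j' ->
    E j' *m parity_mx deg e = parity_mx deg e *m E j'.
  by move=> vj'; rewrite (homog_parity_mxC _ (E_homog vj')) addbF.
rewrite mulmx_suml (bigD1_seq j) //= big1_seq ?addr0 => [|j' /andP[j'j j'Sq]].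
  by rewrite E_parityC // -mulmxA E_mul // eqxx.
have vj' := valid_of_Sq j'Sq.
by rewrite E_parityC // -mulmxA E_mul // (negPf j'j) mulmx0.
Qed.

Lemma parity_proj_comm (A : 'M[K]_n) (f : seq K -> seq K) (d : seq K -> int) :
  (forall i, i \in Sq -> valid_seq I m (f i)) ->
  (forall i, i \in Sq -> A *m E i = E (f i) *m A) ->
  (forall i, i \in Sq -> homog deg (A *m E i) (d i)) ->
  (forall i, i \in Sq -> parity (f i) = parity i (+) oddz (d i)) ->
  A *m parity_proj = parity_proj *m A.
Proof.
move=> f_valid A_E AE_homog parity_f.
rewrite -[RHS]mulmx1 -E_sum mulmx_sumr /parity_proj mulmx_sumr.
apply: eq_big_seq => i iSq.
rewrite mulmxA (homog_parity_mxC _ (AE_homog i iSq)) -parity_f // (A_E i iSq).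
by rewrite -/parity_proj -!mulmxA (A_E i iSq) !mulmxA parity_projE ?f_valid.
Qed.

Lemma stab_parity_proj (A : 'M[K]_n) :
  A *m parity_proj = parity_proj *m A -> stab parity_proj^T A.
Proof. by move=> A_comm; rewrite /stab -trmx_mul A_comm trmx_mul submxMl. Qed.

Lemma parity_proj_commE j : valid_seq I m j ->
  E j *m parity_proj = parity_proj *m E j.
Proof.
move=> vj; apply: (@parity_proj_comm _ idfun (fun=> 0)) => i /valid_of_Sq vi //.
- by rewrite !E_mul // eq_sym; case: eqP => // ->.
- by rewrite -[0]addr0; apply: homogM; apply: E_homog.
- by rewrite addbF.
Qed.

Lemma parity_proj_commX l : (1 <= l <= m)%N -> X l *m parity_proj = parity_proj *m X l.
Proof.
move=> lm; apply: (@parity_proj_comm _ idfun (fun=> 2)) => i /valid_of_Sq vi //.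
- exact: X_E.
- by rewrite -[2]addr0; apply: homogM; [apply: X_homog|apply: E_homog].
- by rewrite addbF.
Qed.

Lemma parity_proj_commS k : (1 <= k < m)%N -> S k *m parity_proj = parity_proj *m S k.
Proof.
move=> km; apply: (@parity_proj_comm _ (fun i => swap_seq i k)) => i /valid_of_Sq vi.
- exact: valid_swap_seq.
- exact: S_E.
- exact: SE_homog.
have /andP[/eqP size_i Ii] := vi; rewrite seq_parity_swap ?size_i //.
by apply/allP => z /(allP Ii); apply: I_neq0.
Qed.

Lemma parity_proj_commP : (1 <= m)%N -> P *m parity_proj = parity_proj *m P.
Proof.
move=> m_gt0; apply: (@parity_proj_comm _ (@eps1_seq K)) => i /valid_of_Sq vi.
- exact: valid_eps1_seq.
- exact: P_E.
- exact: PE_homog.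
by have /andP[/eqP size_i _] := vi; rewrite seq_parity_eps1 ?size_i.
Qed.

Lemma parity_proj_commDmx d : Dmx K deg d *m parity_proj = parity_proj *m Dmx K deg d.
Proof.
apply: (@parity_proj_comm _ idfun (fun=> 0)) => i /valid_of_Sq vi //.
- by symmetry; exact: (homog0_deg_diagC (fun z => (z == d)%:R) (E_homog vi)).
- rewrite -[0]addr0; apply: homogM (E_homog vi).
  exact: (@homog_deg_diag K n deg (fun z => (z == d)%:R)).
- by rewrite addbF.
Qed.

Lemma irreducible_parity_concentrated : irreducible_gmod I m deg E X S P ->
  forall i, valid_seq I m i -> exists e, parity_mx deg e *m E i = 0.
Proof.
case=> _ irr i vi.
have graded_proj : graded_subspace deg parity_proj^T.
  by apply: graded_subspace_of_stab => d; apply/stab_parity_proj/parity_proj_commDmx.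
have := irr _ graded_proj
  (fun j vj => stab_parity_proj (parity_proj_commE vj))
  (fun l lm => stab_parity_proj (parity_proj_commX lm))
  (fun k km => stab_parity_proj (parity_proj_commS km))
  (fun m_gt0 => stab_parity_proj (parity_proj_commP m_gt0)).
case/orP => [proj0|proj_full].
  exists (parity i); rewrite -parity_projE //.
  have /andP[/submx0null proj0T _] := proj0.
  by rewrite -[parity_proj]trmxK proj0T trmx0 mul0mx.
exists (~~ parity i).
have proj_unit : parity_proj \in unitmx by rewrite -unitmx_tr -row_full_unit.
rewrite -[LHS](mulmxK proj_unit) -[_ *m E i *m _]mulmxA parity_proj_commE //.
by rewrite parity_projE // mulmxA parity_mx_orth !mul0mx.
Qed.

End ParityProjection.

Theorem lemma8p28 (K : closedFieldType) (p q : K) (I : pred K) (m n : nat)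
  (deg : 'I_n -> int) (E : seq K -> 'M[K]_n) (X S : nat -> 'M[K]_n)
  (P : 'M[K]_n) :
  theta_params p q I ->
  is_thetaR_gmod p q I m deg E X S P ->
  irreducible_gmod I m deg E X S P ->
  forall i : seq K, valid_seq I m i ->
    in_vZv2 (gdim_coef deg (E i)) \/ in_Zv2 (gdim_coef deg (E i)).
Proof.
move=> [_ [_ [_ [_ [_ [I_neq0 [_ [_ I_closed]]]]]]]] gmod irr i vi.
case: gmod => E_mul [[Sq [Sq_valid [Sq_uniq [E_sum E_notin_Sq]]]]] [S_E [X_E [P_E
  [_ [_ [_ [_ [_ [_ [_ [_ [_ [E_homog [X_homog [SE_homog PE_homog]]]]]]]]]]]]]]].
have I_inv z : I z -> I z^-1 by case/I_closed => _ [].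
have [e parity_E0] := irreducible_parity_concentrated I_neq0 I_inv E_mul Sq_valid
  Sq_uniq E_sum E_notin_Sq S_E X_E P_E E_homog X_homog SE_homog PE_homog irr vi.
case: e parity_E0 => parity_E0; [right|left] => d d_parity.
  exact: gdim_coef_eq0 parity_E0 _.
by apply: gdim_coef_eq0 parity_E0 _; rewrite /oddz d_parity.
Qed.
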